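(* In the setting below, let $W=\ker Q=\{z\in Z: Q(z)=0\}$ and assume that $Z^*$ is the complemented (topological direct) sum of $Y$ and $Q^*(X^* )$. Then $Y$ is isomorphic to $W^*$.
   Context: Setting: $X$ is a separable Banach space, $(x_n)$ a sequence in $S_X$ with $\{\pm x_n\}$ dense in $S_X$; $U$ is a Banach space with a normalized $1$-unconditional boundedly complete basis $(u_n)$. For finite $I,J\subseteq\mathbb N$, $I<J$ means $\max I<\min J$. $Z$ is the completion of $c_{00}$ (unit vectors $(e_i)$) under $\|a\|_Z=\max\{\|\sum_{j=1}^k\|\sum_{i\in I_j}a_ix_i\|_Xu_{\min I_j}\|_U: k\in\mathbb N,\ I_1<\dots<I_k\text{ intervals}\}$. $(e_j^* )$ are the coordinate functionals of the basis $(e_j)$ of $Z$, $Y=\overline{\mathrm{span}}\{e_j^*\}\subseteq Z^*$. $Q:Z\to X$ is the quotient map $Q(\sum a_je_j)=\sum a_jx_j$, and $Q^*:X^*\to Z^*$ its adjoint. *)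

From HB Require Import structures.
From mathcomp Require Import all_boot all_order all_algebra.
From mathcomp Require Import all_classical all_reals all_analysis.
Set Implicit Arguments. Unset Strict Implicit. Unset Printing Implicit Defensive.
Import Order.TTheory GRing.Theory Num.Theory.
Import numFieldNormedType.Exports.
Local Open Scope classical_set_scope.
Local Open Scope ring_scope.

Section Defs.
Variable R : realType.

Definition psum (V : normedModType R) (a : nat -> R) (v : nat -> V) (n : nat) : V :=
  \sum_(i < n) a i *: v i.

Definition schauder_basis (V : normedModType R) (v : nat -> V) : Prop :=
  forall x : V, exists a : nat -> R,
    psum a v @ \oo --> x /\ (forall b : nat -> R, psum b v @ \oo --> x -> b = a).

Definition normalized (V : normedModType R) (v : nat -> V) : Prop :=
  forall n, `|v n| = 1.

Definition one_unconditional (V : normedModType R) (v : nat -> V) : Prop :=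
  forall (n : nat) (a eps : nat -> R), (forall i, eps i = 1 \/ eps i = -1) ->
    `|\sum_(i < n) (eps i * a i) *: v i| = `|\sum_(i < n) a i *: v i|.

Definition boundedly_complete (V : normedModType R) (v : nat -> V) : Prop :=
  forall a : nat -> R, (exists M : R, forall n, `|psum a v n| <= M) ->
    exists x : V, psum a v @ \oo --> x.

(* I_1 < ... < I_k nonempty intervals, I_j = [s j, t j) *)
Definition intervals (k : nat) (s t : nat -> nat) : Prop :=
  forall j, (j < k)%N -> (s j < t j)%N /\ ((j.+1 < k)%N -> (t j <= s j.+1)%N).

Definition zval (X U : normedModType R) (x : nat -> X) (u : nat -> U)
  (a : nat -> R) (k : nat) (s t : nat -> nat) : R :=
  `| \sum_(j < k) (`| \sum_(s j <= i < t j) a i *: x i |) *: u (s j) |.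

(* r is the Z-norm (the maximum in the definition) of the c00 vector a *)
Definition is_znorm (X U : normedModType R) (x : nat -> X) (u : nat -> U)
  (a : nat -> R) (r : R) : Prop :=
  (forall k s t, intervals k s t -> zval x u a k s t <= r) /\
  (exists k s t, intervals k s t /\ zval x u a k s t = r).

Definition trunc (n : nat) (a : nat -> R) : nat -> R :=
  fun i => if (i < n)%N then a i else 0.

Definition bdd_lin_fun (V : normedModType R) (D : set V) (f : V -> R) : Prop :=
  (forall (c : R) (v w : V), D v -> D w -> f (c *: v + w) = c * f v + f w) /\
  (exists M : R, forall v, D v -> `|f v| <= M * `|v|).

Definition opnorm (V : normedModType R) (D : set V) (f : V -> R) : R :=
  sup [set `|f v| | v in [set v | D v /\ `|v| <= 1]].

Definition in_closed_span (V : normedModType R) (g : nat -> V -> R) (f : V -> R) : Prop :=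
  bdd_lin_fun setT f /\
  forall eps : R, 0 < eps -> exists (n : nat) (b : nat -> R),
    opnorm setT (fun z => f z - \sum_(j < n) b j * g j z) < eps.

(* the normed space A (a subspace of V^* with the dual norm) is isomorphic
   to D^*, D a subspace of V; elements of D^* are represented by functionals
   on V, considered up to agreement on D *)
Definition isomorphic_to_dual (V : normedModType R) (A : set (V -> R)) (D : set V) : Prop :=
  exists T : (V -> R) -> (V -> R),
    (forall f, A f -> bdd_lin_fun D (T f)) /\
    (forall (c : R) f g, A f -> A g -> forall w, D w ->
        T (fun z => c * f z + g z) w = c * T f w + T g w) /\
    (forall g, bdd_lin_fun D g -> exists f, A f /\ forall w, D w -> T f w = g w) /\
    (exists c C : R, 0 < c /\ 0 < C /\ forall f, A f ->
        c * opnorm setT f <= opnorm D (T f) /\ opnorm D (T f) <= C * opnorm setT f).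

Definition complemented_sum (V : normedModType R) (A B : set (V -> R)) : Prop :=
  (forall f, bdd_lin_fun setT f -> exists y g, A y /\ B g /\ forall z, f z = y z + g z) /\
  (forall y g, A y -> B g -> (forall z, y z + g z = 0) -> forall z, y z = 0) /\
  (exists K : R, forall f y g, bdd_lin_fun setT f -> A y -> B g ->
      (forall z, f z = y z + g z) ->
      opnorm setT y <= K * opnorm setT f /\ opnorm setT g <= K * opnorm setT f).

End Defs.

From HB Require Import structures.
From mathcomp Require Import all_boot all_order all_algebra.
From mathcomp Require Import all_classical all_reals all_analysis.
Set Implicit Arguments. Unset Strict Implicit. Unset Printing Implicit Defensive.
Import Order.TTheory GRing.Theory Num.Theory.
Import numFieldNormedType.Exports.
From mathcomp Require Import lra zify.
Local Open Scope classical_set_scope.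
Local Open Scope ring_scope.

(* The proof has three ingredients, developed in this order:
   - the real Hahn-Banach theorem (Zorn's lemma on graphs of dominated partial
     extensions), used in its norm-bounded form;
   - an open-mapping estimate for Q: since Q e_n = x_n with ||e_n|| <= 1 and
     {+-x_n} is dense in the sphere, successive approximation gives for every
     y a preimage z with ||z|| <= 2 ||y||; hence a bounded functional on Z
     vanishing on W factors as phi o Q with phi in X^*;
   - duality: a functional g in W^* extends (Hahn-Banach) to h in Z^*, and
     the Y-component of h restricts to g (onto); for f in Y, extending f|_W
     with the same norm to h, f - h vanishes on W, so h = f + (phi o Q) and
     the projection bound K gives ||f|| <= K ||f|_W|| (bounded below).
   The restriction is bounded above trivially, which gives the theorem. *)

Lemma linear_on0 (R : realType) (V : lmodType R) (D : set V) (f : V -> R) :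
  D 0 -> (forall (c : R) v w, D v -> D w -> f (c *: v + w) = c * f v + f w) ->
  f 0 = 0.
Proof.
move=> D0 f_lin; have := f_lin 1 _ _ D0 D0; rewrite scale1r addr0 mul1r => h.
by apply: (addrI (f 0)); rewrite -h addr0.
Qed.

Section HahnBanach.
Variables (R : realType) (V : lmodType R) (p : V -> R).
Hypotheses (p_subadd : forall v w, p (v + w) <= p v + p w)
  (p_homog : forall (t : R) v, 0 < t -> p (t *: v) = t * p v).
Variables (D : set V) (g : V -> R).
Hypotheses (D0 : D 0)
  (D_lin : forall (c : R) v w, D v -> D w -> D (c *: v + w))
  (g_lin : forall (c : R) v w, D v -> D w -> g (c *: v + w) = c * g v + g w)
  (g_le_p : forall v, D v -> g v <= p v).

(* Partial extensions of g are represented by their graphs in V * R. *)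
Let graph_g : set (V * R) := [set q | D q.1 /\ q.2 = g q.1].

Let admissible (G : set (V * R)) : Prop :=
  [/\ graph_g `<=` G,
      (forall z a b, G (z, a) -> G (z, b) -> a = b),
      (forall (c : R) z a w b, G (z, a) -> G (w, b) -> G (c *: z + w, c * a + b)) &
      (forall z a, G (z, a) -> a <= p z)].

Let admissible_graph_g : admissible graph_g.
Proof.
split => //.
- by move=> z a b [_ /= ->] [_ /= ->].
- move=> c z a w b [/= Dz ->] [/= Dw ->]; split => /=; first exact: D_lin.
  by rewrite g_lin.
- by move=> z a [/= Dz ->]; exact: g_le_p.
Qed.

Let admissible00 G : admissible G -> G (0, 0).
Proof.
by case=> sub _ _ _; apply: sub; split => //=; rewrite (linear_on0 D0 g_lin).
Qed.

Let chain_common (F : set (set (V * R))) :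
  F `<=` (fun G => admissible (G `|` graph_g)) -> total_on F subset ->
  forall q q', (\bigcup_(G in F) G `|` graph_g) q ->
    (\bigcup_(G in F) G `|` graph_g) q' ->
  exists H, [/\ admissible H, H q, H q' & H `<=` \bigcup_(G in F) G `|` graph_g].
Proof.
move=> FP tot q q' Sq Sq'.
have sub G : F G -> G `|` graph_g `<=` \bigcup_(G in F) G `|` graph_g.
  by move=> FG r [Gr|gr]; [left; exists G | right].
case: Sq => [[G1 FG1 G1q]|gq]; case: Sq' => [[G2 FG2 G2q']|gq'].
- case: (tot _ _ FG1 FG2) => s.
  + exists (G2 `|` graph_g); split; [exact: FP|left; exact: s|by left|exact: sub].
  + exists (G1 `|` graph_g); split; [exact: FP|by left|left; exact: s|exact: sub].
- exists (G1 `|` graph_g); split; [exact: FP|by left|by right|exact: sub].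
- exists (G2 `|` graph_g); split; [exact: FP|by right|by left|exact: sub].
- exists graph_g; split; [exact: admissible_graph_g | exact: gq | exact: gq' |].
  by move=> r gr; right.
Qed.

Let chain_admissible (F : set (set (V * R))) :
  F `<=` (fun G => admissible (G `|` graph_g)) -> total_on F subset ->
  admissible (\bigcup_(G in F) G `|` graph_g).
Proof.
move=> FP tot; have C := chain_common FP tot; split.
- by move=> r gr; right.
- by move=> z a b Sa Sb; have [H [[_ fH _ _] Ha Hb _]] := C _ _ Sa Sb; exact: fH Ha Hb.
- move=> c z a w b Sa Sb; have [H [[_ _ lH _] Ha Hb sH]] := C _ _ Sa Sb.
  exact/sH/lH.
- by move=> z a Sa; have [H [[_ _ _ dH] Ha _ _]] := C _ _ Sa Sa; exact: dH Ha.
Qed.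

Let step_value A z0 : admissible A ->
  exists c, forall s a, A (s, a) -> a - p (s - z0) <= c /\ c <= p (s + z0) - a.
Proof.
move=> gA; have A00 := admissible00 gA; case: gA => _ _ lA dA.
have sep s a s' a' : A (s, a) -> A (s', a') -> a - p (s - z0) <= p (s' + z0) - a'.
  move=> Aa Aa'; have := dA _ _ (lA 1 _ _ _ _ Aa Aa'); rewrite scale1r mul1r.
  have : p (s + s') <= p (s - z0) + p (s' + z0).
    have -> : s + s' = (s - z0) + (s' + z0) by rewrite addrACA addNr addr0.
    exact: p_subadd.
  lra.
pose E := [set r | exists s a, A (s, a) /\ r = a - p (s - z0)].
have E_ub s' a' : A (s', a') -> ubound E (p (s' + z0) - a').
  by move=> As' r [s [a [As ->]]]; exact: sep.
have E0 : E !=set0 by exists (0 - p (0 - z0)); exists 0, 0.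
have hsE : has_ubound E by exists (p (0 + z0) - 0); exact: E_ub.
exists (sup E) => s a As; split; first by apply: ub_le_sup => //; exists s, a.
by apply: ge_sup => //; exact: E_ub.
Qed.

Let adjoin (A : set (V * R)) z0 c : set (V * R) :=
  [set q | exists s a t, A (s, a) /\ q = (s + t *: z0, a + t * c)].

Let adjoin_dominated A z0 c : admissible A ->
  (forall s a, A (s, a) -> a - p (s - z0) <= c /\ c <= p (s + z0) - a) ->
  forall s a t, A (s, a) -> a + t * c <= p (s + t *: z0).
Proof.
move=> gA hc s a t As; have A00 := admissible00 gA; case: gA => _ _ lA dA.
have [t0|t0|->] := ltgtP t 0; last by rewrite scale0r addr0 mul0r addr0; exact: dA.
- have tp : 0 < - t by rewrite oppr_gt0.
  have := (hc _ _ (lA (- t)^-1 _ _ _ _ As A00)).1; rewrite !addr0.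
  have -> : p ((- t)^-1 *: s - z0) = (- t)^-1 * p (s + t *: z0).
    rewrite -p_homog ?invr_gt0 //; congr p.
    by rewrite scalerDr scalerA invrN mulNr mulVf ?lt_eqF // scaleN1r.
  rewrite -mulrBr -ler_pdivlMl ?invr_gt0 // invrK; lra.
- have := (hc _ _ (lA t^-1 _ _ _ _ As A00)).2; rewrite !addr0.
  have -> : p (t^-1 *: s + z0) = t^-1 * p (s + t *: z0).
    rewrite -p_homog ?invr_gt0 //; congr p.
    by rewrite scalerDr scalerA mulVf ?gt_eqF // scale1r.
  rewrite -mulrBr -ler_pdivrMl ?invr_gt0 // invrK; lra.
Qed.

Let admissible_extend A z0 : admissible A -> ~ (exists a, A (z0, a)) ->
  exists B, [/\ admissible B, A `<=` B & ~ (B `<=` A)].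
Proof.
move=> gA nz0; have [c hc] := step_value z0 gA.
have dom := adjoin_dominated gA hc; have A00 := admissible00 gA.
case: gA => gA fA lA _.
have AB : A `<=` adjoin A z0 c.
  by move=> [s a] As; exists s, a, 0; rewrite scale0r addr0 mul0r addr0.
exists (adjoin A z0 c); split => //; last first.
  move=> BA; apply: nz0; exists c; apply: BA; exists 0, 0, 1.
  by rewrite add0r scale1r add0r mul1r.
split.
- by move=> r /gA/AB.
- move=> z a' b' [s [a [t [As [-> ->]]]]] [s2 [a2 [t2 [As2 [e ->]]]]].
  have [tt2|tt] := eqVneq t t2.
    by subst t2; move: e => /addIr es; subst s2; rewrite (fA _ _ _ As As2).
  exfalso; apply: nz0.
  have ez : z0 = (t - t2)^-1 *: s2 + ((- (t - t2)^-1) *: s + 0).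
    rewrite addr0 scaleNr -scalerBr; apply: (@scalerI _ _ (t - t2)).
      by rewrite subr_eq0.
    rewrite scalerA divff ?subr_eq0 // scale1r scalerBl.
    apply/eqP; rewrite subr_eq eq_sym addrAC subr_eq -e.
    by rewrite [s + _]addrC.
  exists ((t - t2)^-1 * a2 + ((- (t - t2)^-1) * a + 0)); rewrite ez.
  by apply: (lA) => //; apply: (lA).
- move=> k z a' w b' [s [a [t [As [-> ->]]]]] [s2 [a2 [t2 [As2 [-> ->]]]]].
  exists (k *: s + s2), (k * a + a2), (k * t + t2); split; first exact: lA.
  congr pair; first by rewrite scalerDr scalerA scalerDl addrACA.
  by rewrite mulrDr mulrA mulrDl addrACA.
- by move=> z a' [s [a [t [As [-> ->]]]]]; exact: dom.
Qed.

Lemma hahn_banach : exists h : V -> R,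
  [/\ (forall (c : R) v w, h (c *: v + w) = c * h v + h w),
      (forall v, h v <= p v) &
      (forall v, D v -> h v = g v)].
Proof.
have [A [PA Amax]] := @Zorn_bigcup _ (fun G => admissible (G `|` graph_g))
  chain_admissible.
set A' := A `|` graph_g in PA.
have A'max B : admissible B -> A' `<=` B -> B `<=` A'.
  move=> gB AB; apply: contrapT => nBA; apply: (Amax B).
    split; first by move=> r Ar; apply: AB; left.
    by move=> BA; apply: nBA => r /BA Ar; left.
  by rewrite setUidl //; case: gB.
have total z : exists a, A' (z, a).
  apply: contrapT => nz; have [B [gB AB nBA]] := admissible_extend PA nz.
  by apply: nBA; exact: A'max.
have [h hP] := choice total.
case: PA => gA fA lA dA; exists h; split.
- by move=> c v w; apply: fA (hP _) _; apply: lA; apply: hP.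
- by move=> v; exact: dA (hP v).
- by move=> v Dv; apply: fA (hP v) _; apply: gA.
Qed.

End HahnBanach.

Lemma hahn_banach_norm (R : realType) (V : normedModType R) (D : set V)
    (g : V -> R) (M : R) : 0 <= M -> D 0 ->
  (forall (c : R) v w, D v -> D w -> D (c *: v + w)) ->
  (forall (c : R) v w, D v -> D w -> g (c *: v + w) = c * g v + g w) ->
  (forall v, D v -> `|g v| <= M * `|v|) ->
  exists h : V -> R, [/\ bdd_lin_fun setT h, (forall v, `|h v| <= M * `|v|) &
                         (forall v, D v -> h v = g v)].
Proof.
move=> M0 D0 D_lin g_lin g_bd.
have p_subadd (v w : V) : M * `|v + w| <= M * `|v| + M * `|w|.
  by rewrite -mulrDr ler_wpM2l // ler_normD.
have p_homog (t : R) (v : V) : 0 < t -> M * `|t *: v| = t * (M * `|v|).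
  by move=> t0; rewrite normrZ gtr0_norm // mulrCA.
have [h [h_lin h_le h_ext]] := hahn_banach p_subadd p_homog D0 D_lin g_lin
  (fun v Dv => le_trans (ler_norm _) (g_bd v Dv)).
have h_bd v : `|h v| <= M * `|v|.
  rewrite ler_norml h_le andbT lerNl.
  have := h_le (- v); rewrite normrN -scaleN1r -[_ *: v]addr0 h_lin.
  by rewrite (linear_on0 (D := setT) I (fun c v w _ _ => h_lin c v w)) addr0 mulN1r.
exists h; split => //.
by split; [move=> c v w _ _; exact: h_lin | exists M => v _; exact: h_bd].
Qed.

Section OperatorNorm.
Variables (R : realType) (V : normedModType R).

Lemma bdd_lin_fun_restrict (D : set V) (f : V -> R) :
  bdd_lin_fun setT f -> bdd_lin_fun D f.
Proof.
by case=> f_lin [M f_bd]; split; [move=> c v w _ _; exact: f_lin | exists M => v _; exact: f_bd].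
Qed.

Lemma opnorm_ub (D : set V) (f : V -> R) v :
  bdd_lin_fun D f -> D v -> `|v| <= 1 -> `|f v| <= opnorm D f.
Proof.
move=> [_ [M f_bd]] Dv v1; apply: ub_le_sup; last by exists v.
exists `|M| => _ [w [Dw w1] <-].
apply: le_trans (f_bd _ Dw) _; apply: le_trans (ler_norm _) _.
by rewrite normrM normr_id -[leRHS]mulr1 ler_wpM2l.
Qed.

Lemma opnorm_le (D : set V) (f : V -> R) N :
  D 0 -> (forall v, D v -> `|v| <= 1 -> `|f v| <= N) -> opnorm D f <= N.
Proof.
move=> D0 f_bd; apply: ge_sup; first by exists `|f 0|, 0 => //; split => //; rewrite normr0.
by move=> _ [w [Dw w1] <-]; exact: f_bd.
Qed.

Lemma opnorm_ge0 (D : set V) (f : V -> R) :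
  D 0 -> bdd_lin_fun D f -> 0 <= opnorm D f.
Proof.
by move=> D0 fD; apply: le_trans (opnorm_ub fD D0 _); rewrite ?normr0.
Qed.

Lemma opnorm_sub (D D' : set V) (f : V -> R) :
  D' `<=` D -> D' 0 -> bdd_lin_fun D f -> opnorm D' f <= opnorm D f.
Proof.
by move=> sDD' D'0 fD; apply: opnorm_le => // v /sDD' Dv; exact: opnorm_ub.
Qed.

Lemma opnorm_homog (D : set V) (f : V -> R) v :
  D 0 -> (forall (c : R) v w, D v -> D w -> D (c *: v + w)) ->
  bdd_lin_fun D f -> D v -> `|f v| <= opnorm D f * `|v|.
Proof.
move=> D0 D_lin fD Dv; have f0 := linear_on0 D0 fD.1.
have [->|v0] := eqVneq v 0; first by rewrite f0 !normr0 mulr0.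
have nv : 0 < `|v| by rewrite normr_gt0.
have Dv' : D (`|v|^-1 *: v) by rewrite -[_ *: v]addr0; exact: D_lin.
have := opnorm_ub fD Dv'; rewrite normrZ normfV normr_id mulVf ?gt_eqF //.
rewrite -[_ *: v]addr0 fD.1 // f0 addr0 normrM normfV normr_id => /(_ (lexx _)).
by rewrite ler_pdivrMl // mulrC.
Qed.

End OperatorNorm.

(* The unit vectors e_n of Z have norm at most 1: a single unit coordinate
   meets at most one interval I_j, so every value of the Z-norm is 0 or 1. *)
Section UnitVectors.
Variables (R : realType) (X U Z : normedModType R).
Variables (x : nat -> X) (u : nat -> U) (e : nat -> Z).
Hypotheses (x_norm1 : forall n, `|x n| = 1) (u_norm1 : normalized u)
  (Z_norm : forall (n : nat) (a : nat -> R),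
             is_znorm x u (trunc n a) `|\sum_(i < n) a i *: e i|).

Let unit_coef (n : nat) : nat -> R := fun i => if i == n then 1 else 0.

Let block_unit_coef n m : forall p,
  \sum_(m <= i < p) unit_coef n i *: x i =
    if ((m <= n) && (n < p))%N then x n else 0.
Proof.
elim=> [|p IH]; first by rewrite big_geq // andbF.
have [mp|pm] := leqP m p; last first.
  by rewrite big_geq //; case: ifP => // /andP[mn np]; lia.
rewrite big_nat_recr //= IH /unit_coef.
have [<-|pn] := eqVneq p n; first by rewrite ltnn andbF ltnSn mp scale1r add0r.
rewrite scale0r addr0; congr (if _ then _ else _).
by rewrite [(n < p.+1)%N]ltnS [(n <= p)%N]leq_eqVlt eq_sym (negbTE pn).
Qed.

Let intervals_sep k s t : intervals k s t ->
  forall j d, (j + d.+1 < k)%N -> (t j <= s (j + d.+1))%N.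
Proof.
move=> I j; elim=> [|d IH] h.
  by rewrite addn1 in h *; case: (I j (ltnW h)) => _ /(_ h).
have h' : (j + d.+1 < k)%N by lia.
apply: leq_trans (IH h') _.
by case: (I (j + d.+1) h') => /ltnW st; rewrite -addnS => /(_ h); exact: leq_trans.
Qed.

Lemma norm_unit_le1 n : `|e n| <= 1.
Proof.
have E : \sum_(i < n.+1) unit_coef n i *: e i = e n.
  rewrite big_ord_recr /= /unit_coef eqxx scale1r big1 ?add0r //.
  by move=> i _; rewrite (ltn_eqF (ltn_ord i)) scale0r.
rewrite -E; have [_ [k [s [t [I <-]]]]] := Z_norm n.+1 (unit_coef n).
have -> : trunc n.+1 (unit_coef n) = unit_coef n.
  apply: funext => i; rewrite /trunc /unit_coef; case: ifP => // /negbT.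
  by rewrite -leqNgt; case: eqP => // ->; rewrite ltnn.
rewrite /zval (eq_bigr (fun j : 'I_k => `|if ((s j <= n) && (n < t j))%N
  then x n else 0| *: u (s j))); last by move=> j _; rewrite block_unit_coef.
case: (pickP (fun j : 'I_k => ((s j <= n) && (n < t j))%N)) => [j0 P0|none];
  last by rewrite big1 ?normr0 // => j _; rewrite none normr0 scale0r.
rewrite (bigD1 j0) //= P0 big1 ?addr0; first by rewrite normrZ x_norm1 normr1 mul1r u_norm1.
move=> j nj; case: ifP; last by rewrite normr0 scale0r.
case/andP: P0 => s0 t0 /andP[s1 t1]; exfalso.
have [lt|lt|eq] := ltngtP j0 j; last by move: nj; rewrite (val_inj eq) eqxx.
- have := @intervals_sep _ _ _ I j0 (j - j0).-1.
  have -> : (j0 + (j - j0).-1.+1 = j)%N by lia.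
  by move=> /(_ (ltn_ord j)); lia.
- have := @intervals_sep _ _ _ I j (j0 - j).-1.
  have -> : (j + (j0 - j).-1.+1 = j0)%N by lia.
  by move=> /(_ (ltn_ord j0)); lia.
Qed.

End UnitVectors.

Section LinearMap.
Variables (R : realType) (Z X : lmodType R) (Q : Z -> X).
Hypothesis Q_lin : forall (c : R) (z w : Z), Q (c *: z + w) = c *: Q z + Q w.

Lemma lin_map0 : Q 0 = 0.
Proof.
have := Q_lin 1 0 0; rewrite !scale1r addr0 => h.
by apply: (addrI (Q 0)); rewrite -h addr0.
Qed.

Lemma lin_mapZ c z : Q (c *: z) = c *: Q z.
Proof. by have := Q_lin c z 0; rewrite !addr0 lin_map0 addr0. Qed.

Lemma lin_mapD z w : Q (z + w) = Q z + Q w.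
Proof. by have := Q_lin 1 z w; rewrite !scale1r. Qed.

Lemma lin_mapB z w : Q (z - w) = Q z - Q w.
Proof. by rewrite lin_mapD -scaleN1r lin_mapZ scaleN1r. Qed.

End LinearMap.

(* Open mapping estimate: Q maps vectors of norm <= 1 onto a set whose
   symmetrisation is dense in the unit sphere, so with Z complete every y has
   a preimage of norm at most 2 ||y||. *)
Section QuotientLift.
Variables (R : realType) (X : normedModType R) (Z : completeNormedModType R).
Variables (x : nat -> X) (e : nat -> Z) (Q : Z -> X).
Hypotheses (e_norm : forall n, `|e n| <= 1)
  (x_dense : forall y : X, `|y| = 1 -> forall eps : R, 0 < eps ->
             exists n, `|y - x n| < eps \/ `|y + x n| < eps)
  (Q_lin : forall (c : R) (z w : Z), Q (c *: z + w) = c *: Q z + Q w)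
  (Q_bdd : exists M : R, forall z, `|Q z| <= M * `|z|)
  (Q_e : forall j, Q (e j) = x j).

Let Q0 : Q 0 = 0 := lin_map0 Q_lin.
Let QZ c z : Q (c *: z) = c *: Q z := lin_mapZ Q_lin c z.
Let QD z w : Q (z + w) = Q z + Q w := lin_mapD Q_lin z w.
Let QB z w : Q (z - w) = Q z - Q w := lin_mapB Q_lin z w.

Lemma lin_map_cvg (zs : nat -> Z) z : zs @ \oo --> z -> (Q \o zs) @ \oo --> Q z.
Proof.
move=> zs_z; have [M Q_le] := Q_bdd; have M1 : 0 < `|M| + 1 by rewrite ltr_wpDl.
apply/cvgrPdist_lt => eps eps0.
apply: filterS (proj1 (cvgrPdist_lt _ _) zs_z _ (divr_gt0 eps0 M1)) => n hn /=.
rewrite -QB.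
apply: le_lt_trans (Q_le _) _; apply: le_lt_trans (_ : _ <= (`|M| + 1) * _) _.
  by apply: ler_wpM2r; [exact: normr_ge0 | apply: le_trans (ler_norm M) _; rewrite lerDl].
by rewrite mulrC -ltr_pdivlMr.
Qed.

Let approx_step (y : X) : exists w, `|w| <= `|y| /\ `|y - Q w| <= `|y| / 2.
Proof.
have [->|y0] := eqVneq y 0.
  by exists 0; rewrite Q0 subr0 !normr0 mul0r.
have ny : 0 < `|y| by rewrite normr_gt0.
have n1 : `| `|y|^-1 *: y| = 1 by rewrite normrZ normfV normr_id mulVf // gt_eqF.
have half_gt0 : (0 : R) < 2^-1 by rewrite invr_gt0 ltr0n.
have [n [h|h]] := x_dense n1 half_gt0.
- exists (`|y| *: e n); rewrite QZ Q_e normrZ normr_id; split.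
    by rewrite ler_piMr // ltW.
  have -> : y - `|y| *: x n = `|y| *: (`|y|^-1 *: y - x n).
    by rewrite scalerBr scalerA divff ?gt_eqF // scale1r.
  by rewrite normrZ normr_id; move: h; set d := `|_|; nra.
- exists ((- `|y|) *: e n); rewrite QZ Q_e normrZ normrN normr_id; split.
    by rewrite ler_piMr // ltW.
  have -> : y - (- `|y|) *: x n = `|y| *: (`|y|^-1 *: y + x n).
    by rewrite scalerDr scalerA divff ?gt_eqF // scale1r scaleNr opprK.
  by rewrite normrZ normr_id; move: h; set d := `|_|; nra.
Qed.

Lemma preimage_bound y : exists z, Q z = y /\ `|z| <= 2 * `|y|.
Proof.
have [w hw] := choice approx_step.
(* residuals r k, halved at each step, and the corrections v k = w (r k) *)
pose r k := iter k (fun v => v - Q (w v)) y.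
have rS k : r k.+1 = r k - Q (w (r k)) by rewrite /r iterS.
have r_le k : `|r k| <= geometric `|y| 2^-1 k.
  elim: k => [|k IH]; first by rewrite /= expr0 mulr1.
  rewrite rS; apply: le_trans (hw (r k)).2 _.
  by rewrite /= exprS mulrCA mulrC ler_pM2l ?invr_gt0 ?ltr0n.
pose v k := w (r k).
have v_le k : `|v k| <= geometric `|y| 2^-1 k := le_trans (hw (r k)).1 (r_le k).
have QS N : Q (series v N) = y - r N.
  elim: N => [|N IH]; first by rewrite /series /= big_geq // Q0 /r /= subrr.
  by rewrite seriesSr QD IH rS /v opprB addrA addrAC.
have h2 : `|2^-1 : R| < 1.
  by rewrite ger0_norm ?invr_ge0 ?ler0n // invf_lt1 ?ltr0n // ltr1n.
have geo_ge0 n : 0 <= geometric `|y| 2^-1 n.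
  by rewrite geometric_ge0 // invr_ge0 ler0n.
have cg : cvgn (series (geometric `|y| 2^-1)) := is_cvg_geometric_series h2.
have cn : cvgn [normed series v] by apply: (series_le_cvg _ _ v_le cg).
exists (limn (series v)); split; last first.
  apply: le_trans (lim_series_norm cn) _.
  apply: le_trans (lim_series_le cn cg v_le) _.
  rewrite (cvg_lim _ (cvg_geometric_series h2)) //.
  have -> : (1 - 2^-1 : R) = 2^-1 by lra.
  by rewrite invrK mulrC.
have lim_Q : (Q \o series v) @ \oo --> Q (limn (series v)).
  exact/lin_map_cvg/normed_cvg.
apply: (cvg_unique _ lim_Q) => //.
apply/cvgrPdist_lt => eps eps0.
apply: filterS (proj1 (cvgrPdist_lt _ _) (cvg_geometric `|y| h2) _ eps0) => n hn /=.
rewrite QS opprB addrC subrK.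
by apply: le_lt_trans hn; rewrite sub0r normrN ger0_norm // r_le.
Qed.

End QuotientLift.

Section KernelDual.
Variables (R : realType) (Z X : normedModType R) (Q : Z -> X) (C : R).
Hypotheses (Q_lin : forall (c : R) (z w : Z), Q (c *: z + w) = c *: Q z + Q w)
  (Q_lift : forall y, exists z, Q z = y /\ `|z| <= C * `|y|).

Let W : set Z := [set z | Q z = 0].

Let W0 : W 0. Proof. exact: lin_map0. Qed.

Let W_lin (c : R) v w : W v -> W w -> W (c *: v + w).
Proof. by rewrite /W /= Q_lin => -> ->; rewrite scaler0 addr0. Qed.

Lemma factor_through_quotient (k : Z -> R) :
  bdd_lin_fun setT k -> (forall w, W w -> k w = 0) ->
  exists phi : X -> R, bdd_lin_fun setT phi /\ k = phi \o Q.
Proof.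
move=> [k_lin [Mk k_bd]] k_W.
have [lift lift_spec] := choice Q_lift.
have k_fiber z1 z2 : Q z1 = Q z2 -> k z1 = k z2.
  move=> Q12; have : W (z1 - z2) by rewrite /W /= lin_mapB // Q12 subrr.
  move=> /k_W h; have := k_lin 1 (z1 - z2) z2 I I.
  by rewrite scale1r mul1r h add0r subrK.
exists (fun y => k (lift y)); split; last first.
  by apply: funext => z /=; apply: k_fiber; rewrite (lift_spec (Q z)).1.
split.
  move=> c v w _ _; rewrite -k_lin //; apply: k_fiber.
  by rewrite Q_lin (lift_spec _).1 (lift_spec v).1 (lift_spec w).1.
exists (`|Mk| * C) => v _; apply: le_trans (k_bd _ I) _.
apply: le_trans (ler_wpM2r (normr_ge0 _) (ler_norm Mk)) _.
by rewrite -mulrA ler_wpM2l // (lift_spec v).2.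
Qed.

Variable Y : set (Z -> R).
Hypotheses (Y_bdd : forall f, Y f -> bdd_lin_fun setT f)
  (Y_compl : complemented_sum Y
     [set g | exists phi : X -> R, bdd_lin_fun setT phi /\ g = phi \o Q]).

(* Restriction Y -> W^* is onto: extend g to Z and take the Y-component. *)
Lemma restriction_onto (g : Z -> R) :
  bdd_lin_fun W g -> exists f, Y f /\ forall w, W w -> f w = g w.
Proof.
move=> [g_lin [Mg g_bd]]; have [decomp _] := Y_compl.
have g_bd' v : W v -> `|g v| <= `|Mg| * `|v|.
  by move=> Wv; apply: le_trans (g_bd _ Wv) (ler_wpM2r (normr_ge0 _) (ler_norm _)).
have [h [h_bdd _ h_ext]] := hahn_banach_norm (normr_ge0 Mg) W0 W_lin g_lin g_bd'.
have [f [g' [Yf [[phi [[phi_lin _] ->]] h_eq]]]] := decomp h h_bdd.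
exists f; split => // w Ww; move: (h_eq w).
by rewrite /= Ww (linear_on0 (D := setT) I phi_lin) addr0 h_ext.
Qed.

(* Restriction Y -> W^* is bounded below: extend f|_W with the same norm to h;
   then h - f factors through Q, so the projection onto Y bounds ||f||. *)
Lemma restriction_bounded_below :
  exists c, 0 < c /\ forall f, Y f -> c * opnorm setT f <= opnorm W f.
Proof.
have [_ [_ [K K_proj]]] := Y_compl.
exists (`|K| + 1)^-1; split => [|f Yf]; first by rewrite invr_gt0 ltr_wpDl.
have f_bdd := Y_bdd Yf; have [f_lin [Mf f_bd]] := f_bdd.
have fW : bdd_lin_fun W f := bdd_lin_fun_restrict W f_bdd.
set N := opnorm W f; have N0 : 0 <= N := opnorm_ge0 W0 fW.
have [h [h_bdd h_bd h_ext]] := hahn_banach_norm N0 W0 W_lin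
  (fun c v w _ _ => f_lin c v w I I) (fun v Wv => opnorm_homog W0 W_lin fW Wv).
have h_norm : opnorm setT h <= N.
  apply: opnorm_le => // v _ v1; apply: le_trans (h_bd v) _.
  by rewrite -[leRHS]mulr1 ler_wpM2l.
have diff_bdd : bdd_lin_fun setT (fun z => f z - h z).
  have [h_lin [Mh h_bd']] := h_bdd; split => [c v w _ _|].
    by rewrite f_lin // h_lin //; lra.
  exists (Mf + Mh) => v _; apply: le_trans (ler_normB _ _) _.
  by rewrite mulrDl lerD // ?f_bd ?h_bd'.
have [phi [[phi_lin [Mp phi_bd]] diff_eq]] := factor_through_quotient diff_bdd
  (fun w Ww => ltac:(by rewrite /= h_ext // subrr)).
have minus_phiQ : exists psi : X -> R, bdd_lin_fun setT psi /\
    (fun z => - phi (Q z)) = psi \o Q.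
  exists (fun y => - phi y); split => //; split.
    by move=> c v w _ _; rewrite phi_lin //; lra.
  by exists Mp => v _; rewrite normrN; exact: phi_bd.
have h_split z : h z = f z + - phi (Q z).
  by have := congr1 (fun F => F z) diff_eq => /=; lra.
have [f_le _] := K_proj h f _ h_bdd Yf minus_phiQ h_split.
rewrite ler_pdivrMl ?ltr_wpDl //; apply: le_trans f_le _.
have := opnorm_ge0 I h_bdd; have := normr_ge0 K; have := ler_norm K; nra.
Qed.

End KernelDual.

Unset Implicit Arguments.

Theorem propositionA9 (R : realType)
  (X U Z : completeNormedModType R)
  (x : nat -> X) (u : nat -> U) (e : nat -> Z)
  (estar : nat -> Z -> R) (Q : Z -> X)
  (* X separable, (x_n) in S_X with {+-x_n} dense in S_X *)
  (HXsep : exists d : nat -> X, forall (y : X) (eps : R), 0 < eps ->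
             exists n, `|y - d n| < eps)
  (Hx1 : forall n, `|x n| = 1)
  (Hxdense : forall y : X, `|y| = 1 -> forall eps : R, 0 < eps ->
             exists n, `|y - x n| < eps \/ `|y + x n| < eps)
  (* (u_n) normalized 1-unconditional boundedly complete basis of U *)
  (Hub : schauder_basis u) (Hun : normalized u)
  (Huu : one_unconditional u) (Hubc : boundedly_complete u)
  (* Z is the completion of c00 under ||.||_Z, e_i the unit vectors *)
  (HZnorm : forall (n : nat) (a : nat -> R),
             is_znorm x u (trunc n a) `|\sum_(i < n) a i *: e i|)
  (HZdense : forall (z : Z) (eps : R), 0 < eps ->
             exists (n : nat) (a : nat -> R), `|z - \sum_(i < n) a i *: e i| < eps)
  (* coordinate functionals *)
  (Hestar : forall j, bdd_lin_fun setT (estar j) /\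
             forall i, estar j (e i) = (if i == j then 1 else 0))
  (* the quotient map Q *)
  (HQlin : forall (c : R) (z w : Z), Q (c *: z + w) = c *: Q z + Q w)
  (HQbdd : exists M : R, forall z, `|Q z| <= M * `|z|)
  (HQe : forall j, Q (e j) = x j)
  (* Z^* = Y (+) Q^*(X^* ) complemented *)
  (Hcompl : complemented_sum
              (in_closed_span estar)
              [set g | exists phi : X -> R, bdd_lin_fun setT phi /\ g = phi \o Q]) :
  isomorphic_to_dual (in_closed_span estar) [set z | Q z = 0].
Proof.
have Q_lift := preimage_bound (norm_unit_le1 Hx1 Hun HZnorm) Hxdense HQlin HQbdd HQe.
have Y_bdd f : in_closed_span estar f -> bdd_lin_fun setT f by case.
have [c [c0 below]] := restriction_bounded_below HQlin Q_lift Y_bdd Hcompl.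
(* Functionals on Z represent elements of W^* by restriction, so the
   isomorphism is the identity on representatives. *)
exists id; split; [|split; [|split]].
- by move=> f /Y_bdd; exact: bdd_lin_fun_restrict.
- by [].
- by move=> g /(restriction_onto HQlin Hcompl).
- exists c, 1; split; [exact: c0 | split; [exact: ltr01 | move=> f Yf]].
  split; first exact: below.
  rewrite mul1r; apply: opnorm_sub => //; first exact: lin_map0.
  exact: Y_bdd.
Qed.
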